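(* Let $M$, $x$, $T$, $B$, the encoding $\langle\cdot\rangle$ and the coin set $\mathcal{C}$ be as in the context. Let $1\le j\le T$, and let $C$ be the configuration of $M$ on input $x$ at time step $j$, that is, after $j-1$ steps of computation, with the convention that a halting configuration stays put. Run the greedy change-making process with coin set $\mathcal{C}$, starting from the remaining amount $W_C:=\langle C\rangle\cdot B^{(T-j)T}$. Then the next $T-1$ or $T-2$ coins selected reduce the remaining amount exactly to $W_{\Delta(C)}:=\langle\Delta(C)\rangle\cdot B^{(T-j-1)T}$. Here $\Delta(C)$ is the successor configuration of $C$ under $\delta$, with $\Delta(C)=C$ if $C$ is halting, and $B^{(-1)T}$ is read as $0$.
   Context: Turing machine. $M=\langle Q,\Gamma,\Sigma,\delta,q_0,q_{\mathrm{accept}},q_{\mathrm{reject}}\rangle$ is a deterministic single-tape Turing machine: - $\perp\in\Gamma$ is the blank symbol and $\Sigma\subseteq\Gamma\setminus\{\perp\}$. - $F=\{q_{\mathrm{accept}},q_{\mathrm{reject}}\}$ is the set of halting states. - $\delta:(Q\setminus F)\times\Gamma\to Q\times\Gamma\times\{L,R\}$ is the transition function. Assumptions on $M$: - The first tape cell always holds a left endmarker $\$\in\Gamma$. Whenever the head reads $\$$ in a state $q\notin F$, we have $\delta(q,\$)=(q',\$,R)$ for some $q'$. - Before entering a halting state, the head moves to the endmarker, then overwrites cells 2 and 3 with $\perp$, and halts over cell 2 in the halting state. - On input $x$ of length $n$, $M$ halts within $T=C_M n^{\ell}$ steps, where $T\ge n+3$. Hence only tape cells $1,\dots,T$ are used,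 and the head never reaches cell $T$. A configuration consists of a state $q$, a head position $h$ with $1\le h\le T$, and tape contents $a_1\cdots a_T\in\Gamma^T$. The configuration at time step 1 has state $q_0$, head position 1, and tape $\$\,x_1\cdots x_n\perp^{T-n-1}$. Numerical encoding: - Fix bijections $f:Q\to\{1,\dots,s\}$ and $g:\Gamma\to\{1,\dots,k\}$, where $s=|Q|$ and $k=|\Gamma|$. - Encode a pair $(q,a)$ by $p(q,a):=f(q)k+g(a)$. - Fix an integer base $B\ge(s+1)k+2$. - A digit string $d_1\cdots d_T$ in base $B$ denotes $\sum_{i=1}^T d_iB^{T-i}$. - For a configuration $C$ with state $q$, head position $h$ and tape $a_1\cdots a_T$, set $\langle C\rangle$ to be the digit string with $d_h=p(q,a_h)$ and $d_i=g(a_i)$ for $i\ne h$. Coin set $\mathcal{C}$ (with $B^{(-1)T}:=0$) consists of exactly the following three kinds of coins. (i) Copy coins. For $1\le i,j\le T$ and $a\in\Gamma$: $$c_{\mathrm{copy}}(a,i,j)=g(a)B^{T-i}\big(B^{(T-j)T}-B^{(T-j-1)T}\big).$$ (ii) Transition coins. For $2\le i\le T-1$, $1\le j\le T$, $q\in Q$, and $a^-,a,a^+\in\Gamma$: $$c_{\mathrm{transition}}(q,a^-,a,a^+,i,j)=u\,B^{(T-j)T}-v\,B^{(T-j-1)T},$$ where $u=g(a^-)B^{T-i+1}+p(q,a)B^{T-i}+g(a^+)B^{T-i-1}$ and $v$ is defined by cases: - if $q\notin F$ and $\delta(q,a)=(q',a',L)$: $v=p(q',a^-)B^{T-i+1}+g(a')B^{T-i}+g(a^+)B^{T-i-1}$;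 - if $q\notin F$ and $\delta(q,a)=(q',a',R)$: $v=g(a^-)B^{T-i+1}+g(a')B^{T-i}+p(q',a^+)B^{T-i-1}$; - if $q\in F$: $v=u$. (iii) Left-end transition coins. For $q\in Q\setminus F$, $a^+\in\Gamma$, and $1\le j\le T$, with $\delta(q,\$)=(q',\$,R)$: $$c^{\text{left-end}}_{\mathrm{transition}}(q,a^+,j)=\big(p(q,\$)B^{T-1}+g(a^+)B^{T-2}\big)B^{(T-j)T}-\big(g(\$)B^{T-1}+p(q',a^+)B^{T-2}\big)B^{(T-j-1)T}.$$ Greedy change-making process: from a remaining amount $W'$, repeatedly select the largest coin in $\mathcal{C}$ that is at most $W'$, and subtract it from $W'$. *)

From HB Require Import structures.
From mathcomp Require Import all_boot all_order all_algebra.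
Import Order.TTheory GRing.Theory Num.Theory.
Set Implicit Arguments. Unset Strict Implicit. Unset Printing Implicit Defensive.
Local Open Scope ring_scope.

(* Directions: [true] = R, [false] = L.  delta is given as a total function;
   only its values on non-halting states are ever used. *)
Record TM := {
  tm_Q : finType;
  tm_G : finType;
  tm_blank : tm_G;
  tm_dollar : tm_G;
  tm_Sigma : pred tm_G;
  tm_delta : tm_Q -> tm_G -> tm_Q * tm_G * bool;
  tm_q0 : tm_Q;
  tm_qacc : tm_Q;
  tm_qrej : tm_Q
}.
Arguments tm_blank : clear implicits.
Arguments tm_dollar : clear implicits.
Arguments tm_Sigma : clear implicits.
Arguments tm_q0 : clear implicits.
Arguments tm_qacc : clear implicits.
Arguments tm_qrej : clear implicits.
Arguments tm_delta {t}.

Definition halting (M : TM) (q : tm_Q M) : bool :=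
  (q == tm_qacc M) || (q == tm_qrej M).

(* Configurations: state, head position (cells numbered from 1), tape
   contents (cell i holds [cf_tape i]). *)
Record config (M : TM) := Config {
  cf_state : tm_Q M;
  cf_head : nat;
  cf_tape : nat -> tm_G M
}.

Definition step (M : TM) (c : config M) : config M :=
  if halting (cf_state c) then c else
  let: (q', a', d) := tm_delta (cf_state c) (cf_tape c (cf_head c)) in
  Config q' (if d then (cf_head c).+1 else (cf_head c).-1)
    (fun i => if i == cf_head c then a' else cf_tape c i).

Definition init_config (M : TM) (x : seq (tm_G M)) : config M :=
  Config (tm_q0 M) 1
    (fun i => if i == 1%N then tm_dollar M
              else if (2 <= i <= (size x).+1)%N then nth (tm_blank M) x (i - 2)
              else tm_blank M).

(* Configuration at time step j (j >= 1), i.e. after j-1 steps. *)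
Definition conf_at (M : TM) (x : seq (tm_G M)) (j : nat) : config M :=
  iter j.-1 (@step M) (init_config x).

Definition penc (M : TM) (f : tm_Q M -> nat) (g : tm_G M -> nat)
    (q : tm_Q M) (a : tm_G M) : nat :=
  (f q * #|tm_G M| + g a)%N.

Definition enc (M : TM) (f : tm_Q M -> nat) (g : tm_G M -> nat) (B T : nat)
    (c : config M) : int :=
  \sum_(1 <= i < T.+1)
     ((if i == cf_head c then penc f g (cf_state c) (cf_tape c i)
       else g (cf_tape c i))%:Z * (B%:Z) ^+ (T - i)).

Definition Bcur (B T j : nat) : int := (B%:Z) ^+ ((T - j) * T).
(* B^((T-j-1)T), read as 0 when j = T (more generally when j >= T). *)
Definition Bnext (B T j : nat) : int :=
  if (j < T)%N then (B%:Z) ^+ ((T - j.+1) * T) else 0.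

Definition c_copy (M : TM) (g : tm_G M -> nat) (B T : nat)
    (a : tm_G M) (i j : nat) : int :=
  (g a)%:Z * (B%:Z) ^+ (T - i) * (Bcur B T j - Bnext B T j).

Definition c_trans_u (M : TM) (f : tm_Q M -> nat) (g : tm_G M -> nat) (B T : nat)
    (q : tm_Q M) (am a ap : tm_G M) (i : nat) : int :=
  (g am)%:Z * (B%:Z) ^+ (T - i).+1 + (penc f g q a)%:Z * (B%:Z) ^+ (T - i)
  + (g ap)%:Z * (B%:Z) ^+ (T - i).-1.

Definition c_trans_v (M : TM) (f : tm_Q M -> nat) (g : tm_G M -> nat) (B T : nat)
    (q : tm_Q M) (am a ap : tm_G M) (i : nat) : int :=
  if halting q then c_trans_u f g B T q am a ap i else
  let: (q', a', d) := tm_delta q a in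
  if d then
    (g am)%:Z * (B%:Z) ^+ (T - i).+1 + (g a')%:Z * (B%:Z) ^+ (T - i)
    + (penc f g q' ap)%:Z * (B%:Z) ^+ (T - i).-1
  else
    (penc f g q' am)%:Z * (B%:Z) ^+ (T - i).+1 + (g a')%:Z * (B%:Z) ^+ (T - i)
    + (g ap)%:Z * (B%:Z) ^+ (T - i).-1.

Definition c_trans (M : TM) (f : tm_Q M -> nat) (g : tm_G M -> nat) (B T : nat)
    (q : tm_Q M) (am a ap : tm_G M) (i j : nat) : int :=
  c_trans_u f g B T q am a ap i * Bcur B T j
  - c_trans_v f g B T q am a ap i * Bnext B T j.

(* (iii) left-end transition coins, with delta(q,$) = (q',$,R). *)
Definition c_left (M : TM) (f : tm_Q M -> nat) (g : tm_G M -> nat) (B T : nat)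
    (q : tm_Q M) (ap : tm_G M) (j : nat) : int :=
  let q' := (tm_delta q (tm_dollar M)).1.1 in
  ((penc f g q (tm_dollar M))%:Z * (B%:Z) ^+ (T - 1) + (g ap)%:Z * (B%:Z) ^+ (T - 2))
    * Bcur B T j
  - ((g (tm_dollar M))%:Z * (B%:Z) ^+ (T - 1) + (penc f g q' ap)%:Z * (B%:Z) ^+ (T - 2))
    * Bnext B T j.

Definition is_coin (M : TM) (f : tm_Q M -> nat) (g : tm_G M -> nat) (B T : nat)
    (c : int) : Prop :=
  (exists (a : tm_G M) (i j : nat),
      [/\ (1 <= i <= T)%N, (1 <= j <= T)%N & c = c_copy g B T a i j])
  \/ (exists (q : tm_Q M) (am a ap : tm_G M) (i j : nat),
      [/\ (2 <= i <= T.-1)%N, (1 <= j <= T)%N & c = c_trans f g B T q am a ap i j])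
  \/ (exists (q : tm_Q M) (ap : tm_G M) (j : nat),
      [/\ ~~ halting q, (1 <= j <= T)%N & c = c_left f g B T q ap j]).

Definition greedy_step (coin : int -> Prop) (W W' : int) : Prop :=
  exists c, [/\ coin c, c <= W, (forall c', coin c' -> c' <= W -> c' <= c)
              & W' = W - c].

Fixpoint greedy_run (coin : int -> Prop) (m : nat) (W W' : int) : Prop :=
  match m with
  | 0 => W = W'
  | m'.+1 => exists W1, greedy_step coin W W1 /\ greedy_run coin m' W1 W'
  end.

From mathcomp Require Import all_boot all_order all_algebra.
Import Order.TTheory GRing.Theory Num.Theory.
From mathcomp Require Import zify.
Set Implicit Arguments. Unset Strict Implicit. Unset Printing Implicit Defensive.
Local Open Scope ring_scope.

(* Read <C> as a T-digit numeral in base B.  Starting from <C>·X_j (X_j = B^((T-j)T),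
   Y_j = B^((T-j-1)T)), the greedy process pays for the cells from left to right: the amount left
   is always R·X_j + P·Y_j, where R is the numeral formed by the unprocessed digits of <C> and P
   the numeral of the digits of <Δ(C)> written so far.  A cell at distance >= 2 from the head is
   paid by a copy coin, the window around the head by one transition or left-end coin, hence
   T-1 or T-2 coins.  Every coin is U·X_j' - V·Y_j' with U, V < B^T; coins of another level are
   too large or too small, and at level j a comparison of leading base-B digits shows that any
   other coin is smaller than the intended one or exceeds the amount left, while agreement in
   all digits forces the intended coin since f and g are injective. *)

Lemma greedy_run_cat (coin : int -> Prop) m1 m2 W1 W2 W3 :
  greedy_run coin m1 W1 W2 -> greedy_run coin m2 W2 W3 -> greedy_run coin (m1 + m2) W1 W3.
Proof.
elim: m1 W1 => [|m IHm] W1 /=; first by move=> ->.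
by case=> W [step_W run_W] run_W2; exists W; split; last exact: IHm.
Qed.

Section LeftEndmarker.
Local Open Scope nat_scope.
Variable M : TM.
Hypothesis dollar_moves_right : forall q, ~~ halting q ->
  (tm_delta q (tm_dollar M)).1.2 = tm_dollar M /\ (tm_delta q (tm_dollar M)).2 = true.
Local Notation dollar := (tm_dollar M).

Lemma step_left_end (c : config M) : 1 <= cf_head c -> cf_tape c 1 = dollar ->
  1 <= cf_head (step c) /\ cf_tape (step c) 1 = dollar.
Proof.
case: c => q h tp /= h_ge1 tp1; rewrite /step /=; case: ifP => // q_run.
case E: (tm_delta q (tp h)) => [[q' a'] dir] /=.
have [h1 | h_ne1] := eqVneq h 1.
  subst h; move: E; rewrite tp1; have := dollar_moves_right (negbT q_run).
  by case: (tm_delta q dollar) => [[q'' a''] dir'] /= [-> ->] [_ <- <-].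
by split => //; case: dir E; lia.
Qed.

Lemma conf_at_left_end x j :
  1 <= cf_head (conf_at x j) /\ cf_tape (conf_at x j) 1 = dollar.
Proof.
rewrite /conf_at; elim: j.-1 => [//|n [h_ge1 tp1]] /=.
exact: step_left_end.
Qed.

End LeftEndmarker.

Section Positional.
Local Open Scope nat_scope.
Variables B T : nat.
Hypothesis B_gt1 : 1 < B.

Local Notation N := (B ^ T).

Definition weight p := B ^ (T - p).

Lemma weight_gt0 p : 0 < weight p.
Proof. by rewrite expn_gt0 (ltn_trans _ B_gt1). Qed.

Lemma weightS p : p < T -> weight p = B * weight p.+1.
Proof. by move=> lt_pT; rewrite /weight -expnS subnSK. Qed.

Lemma weight_pred p : 0 < p <= T -> weight p.-1 = B * weight p.
Proof.
by case/andP=> p_gt0 le_pT; rewrite weightS ?prednK // (leq_trans _ le_pT) ?ltn_predL.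
Qed.

Lemma weight_ltn t i : t < i -> i <= T -> B * weight i <= weight t.
Proof. by move=> lt_ti le_iT; rewrite /weight -expnS leq_pexp2l //; lia. Qed.

Lemma weight_le_N p : 1 <= p <= T -> B * weight p <= N.
Proof. by move=> p_ge1; rewrite /weight -expnS leq_pexp2l //; lia. Qed.

Lemma digit_tail_lt a p : a < B -> p < T -> a * weight p.+1 < weight p.
Proof.
by move=> a_lt lt_pT; rewrite (weightS lt_pT) ltn_pmul2r ?weight_gt0.
Qed.

Lemma window2_lt a1 a2 p : a1 < B -> a2 < B -> p < T ->
  a1 * weight p + a2 * weight p.+1 < B * weight p.
Proof.
move=> a1_lt a2_lt lt_pT; rewrite (weightS lt_pT).
have := leq_mul a1_lt (leqnn (B * weight p.+1)).
have := weight_gt0 p.+1.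
by have := leq_mul a2_lt (leqnn (weight p.+1)); nia.
Qed.

Lemma window3_lt a1 a2 a3 i : a1 < B -> a2 < B -> a3 < B -> 2 <= i < T ->
  a1 * weight i.-1 + a2 * weight i + a3 * weight i.+1 < B * weight i.-1.
Proof.
move=> a1_lt a2_lt a3_lt i_rng; have := window2_lt a2_lt a3_lt (proj2 (andP i_rng)).
rewrite -addnA -weight_pred; last by lia.
by have := leq_mul a1_lt (leqnn (weight i.-1)); nia.
Qed.

Definition suffix_val (d : nat -> nat) i := \sum_(i <= p < T.+1) d p * weight p.
Definition prefix_val (e : nat -> nat) i := \sum_(1 <= p < i) e p * weight p.

Lemma suffix_valS d i : i <= T -> suffix_val d i = d i * weight i + suffix_val d i.+1.
Proof. by move=> le_iT; rewrite /suffix_val big_ltn. Qed.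

Lemma suffix_val_end d : suffix_val d T.+1 = 0.
Proof. by rewrite /suffix_val big_geq. Qed.

Lemma suffix_val_lt d i : (forall p, d p < B) -> i <= T -> suffix_val d i.+1 < weight i.
Proof.
move=> d_lt; elim: {i}(T - i) {-2}i (erefl (T - i)) => [|n IHn] i def_n le_iT.
  have -> : i = T by lia.
  by rewrite suffix_val_end weight_gt0.
have lt_iT : i < T by lia.
rewrite suffix_valS // (weightS lt_iT); have := IHn i.+1 ltac:(lia) lt_iT.
by have := d_lt i.+1; nia.
Qed.

Lemma suffix_val_ub d i : (forall p, (d p).+2 <= B) -> i <= T ->
  (suffix_val d i).+2 <= B * weight i.
Proof.
move=> d_ub le_iT; rewrite suffix_valS //.
have := suffix_val_lt (fun p => ltnW (d_ub p)) le_iT.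
by have := d_ub i; have := weight_gt0 i; nia.
Qed.

Lemma prefix_val1 e : prefix_val e 1 = 0.
Proof. by rewrite /prefix_val big_geq. Qed.

Lemma prefix_valS e i : 1 <= i -> prefix_val e i.+1 = prefix_val e i + e i * weight i.
Proof. by move=> i_ge1; rewrite /prefix_val big_nat_recr. Qed.

Lemma prefix_val_ub e i : (forall p, e p < B) -> 1 <= i <= T ->
  prefix_val e i + B * weight i <= N.
Proof.
move=> e_lt; elim: i => [//|i IHi] /andP[i_ge0 le_iT].
have [->|i_gt0] := posnP i; first by rewrite prefix_val1 weight_le_N //; lia.
rewrite prefix_valS //; have := IHi ltac:(lia); rewrite (weightS le_iT).
by have := e_lt i; nia.
Qed.

Lemma prefix_val_lt e i : 0 < T -> (forall p, e p < B) -> 1 <= i <= T.+1 ->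
  prefix_val e i < N.
Proof.
move=> T_gt0 e_lt /andP[i_ge1 le_iT1]; have [le_iT|] := leqP i T.
  by have := prefix_val_ub e_lt (i:=i) ltac:(lia); have := weight_gt0 i; nia.
move=> lt_Ti; have -> : i = T.+1 by lia.
rewrite prefix_valS //; have := prefix_val_ub e_lt (i:=T) ltac:(lia).
by have := e_lt T; have := weight_gt0 T; nia.
Qed.


(* With R·X + P·Y left (X = B^T·Y), the competitor U·X - V·Y is smaller than the chosen coin
   D·X - E·Y, exceeds the amount left, or is the chosen coin. *)
Definition loses_to R P D E U V :=
  [\/ U < D, R * N + P + V < U * N | U = D /\ V = E].

Lemma lead_digit_lt p u r U' X : u < r -> U' < weight p ->
  u * weight p + U' < r * weight p + X.
Proof. by move=> lt_ur U'_lt; nia. Qed.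

Lemma loses_to_gt R P D E U V : R < U -> P + V < N -> loses_to R P D E U V.
Proof. by move=> lt_RU PV_lt; apply: Or32; have := leq_mul lt_RU (leqnn N); nia. Qed.

Lemma loses_to_digit p c u r U' D' R' R P D E U V :
  R = c + (r * weight p + R') -> D = c + (r * weight p + D') ->
  U = c + (u * weight p + U') -> U' < weight p -> R' < weight p -> P + V < N ->
  (u = r -> loses_to R P D E U V) -> loses_to R P D E U V.
Proof.
move=> -> -> -> U'_lt R'_lt PV_lt same_digit.
have [lt_ur | lt_ru | eq_ur] := ltngtP u r; last exact: same_digit.
- by apply: Or31; rewrite ltn_add2l lead_digit_lt.
- by apply: loses_to_gt; rewrite // ltn_add2l lead_digit_lt.
Qed.

(* A competitor whose leading digit lies left of position i overshoots; one whose leading digit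
   lies right of it, or is smaller, loses against any D >= r·B^(T-i). *)
Lemma loses_to_lead i r R' R P D :
  R = r * weight i + R' -> 1 <= i <= T -> 0 < r -> r.+2 <= B -> R' < weight i ->
  r * weight i <= D -> P + B * weight i <= N ->
  forall E t u U' U V, U = u * weight t + U' -> 1 <= t <= T -> 0 < u < B ->
  U' < weight t -> V < B * weight t ->
  (t = i -> u = r -> loses_to R P D E U V) -> loses_to R P D E U V.
Proof.
move=> -> i_rng r_gt0 r_ub R'_lt le_D P_ub E t u U' U V -> t_rng u_rng U'_lt V_lt same_lead.
have wi_gt0 := weight_gt0 i; have wt_gt0 := weight_gt0 t.
have V_ltN : V < N by apply: leq_trans V_lt (weight_le_N t_rng).
have [lt_ti | lt_it | eq_ti] := ltngtP t i.
- have w_lt := weight_ltn lt_ti (proj2 (andP i_rng)).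
  have le_RU : (r * weight i + R').+2 <= u * weight t + U' by nia.
  by apply: Or32; have := leq_mul le_RU (leqnn N); nia.
- have w_lt := weight_ltn lt_it (proj2 (andP t_rng)).
  by apply: Or31; nia.
subst t; have [lt_ur | lt_ru | eq_ur] := ltngtP u r; last exact: same_lead.
- by apply: Or31; apply: leq_trans le_D; rewrite -[r * _]addn0 lead_digit_lt.
- by apply: loses_to_gt; [rewrite lead_digit_lt | lia].
Qed.

Definition cur_scale j := B ^ ((T - j) * T).
Definition next_scale j := if j < T then B ^ ((T - j.+1) * T) else 0.

Lemma cur_scale_gt0 j : 0 < cur_scale j.
Proof. by rewrite expn_gt0 (ltn_trans _ B_gt1). Qed.

Lemma cur_scaleE j : j < T -> cur_scale j = N * next_scale j.
Proof.
by move=> lt_jT; rewrite /next_scale lt_jT -expnD -mulSn -subSn.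
Qed.

Lemma next_scale_le j : j <= T -> next_scale j * N <= cur_scale j.
Proof.
case: (ltnP j T) => [lt_jT _ | le_Tj _]; first by rewrite cur_scaleE // mulnC.
by rewrite /next_scale ltnNge le_Tj.
Qed.

Lemma cur_scale_le_next i j : i < j -> j <= T -> cur_scale j <= next_scale i.
Proof.
move=> lt_ij le_jT; rewrite /cur_scale /next_scale (leq_trans lt_ij le_jT).
by rewrite leq_pexp2l ?(ltnW B_gt1) // leq_mul2r; lia.
Qed.

(* The last condition: a coin of level j' is worth at least (B^T - 1)·Y_j', more than any
   amount left at a later level. *)
Definition coin_bounded U V := [/\ U < N, V < N & V + N <= U * N + 1].

Lemma mul_scale_lt X Y P : 0 < X -> Y * N <= X -> P < N -> P * Y < X.
Proof.
move=> X_gt0 le_YX P_lt; have [->|Y_gt0] := posnP Y; first by rewrite muln0.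
by apply: leq_trans le_YX; rewrite mulnC ltn_pmul2l.
Qed.

Lemma loses_to_fit X Y R P D E U V : 0 < X -> Y * N <= X ->
  P < N -> E < N -> V < N -> loses_to R P D E U V ->
  U * X <= R * X + P * Y + V * Y -> U * X + E * Y <= D * X + V * Y.
Proof.
move=> X_gt0 le_YX P_lt E_lt V_lt [lt_UD | over | [-> ->] //] fit.
  have := leq_mul lt_UD (leqnn X); have := mul_scale_lt X_gt0 le_YX E_lt.
  by nia.
exfalso; have lt_RU : R < U by nia.
have [Y0|Y_gt0] := posnP Y; first by move: fit; rewrite Y0; nia.
have := leq_mul (leqnn (U - R)) le_YX; nia.
Qed.

Definition state_val R P j : int := (R * cur_scale j + P * next_scale j)%:Z.
Definition coin_val U V j : int := (U * cur_scale j)%:Z - (V * next_scale j)%:Z.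

Lemma coin_val_max j j' R P D E U V : 1 <= j <= T -> 1 <= j' <= T ->
  R.+2 <= N -> P < N -> coin_bounded D E -> coin_bounded U V ->
  (j' = j -> loses_to R P D E U V) ->
  (coin_val U V j' <= state_val R P j -> coin_val U V j' <= coin_val D E j)%R.
Proof.
move=> j_rng j'_rng R_ub P_lt [D_lt E_lt DE_ub] [U_lt V_lt UV_ub] same.
rewrite /coin_val /state_val.
have Xj_gt0 := cur_scale_gt0 j; have le_YXj := next_scale_le (proj2 (andP j_rng)).
have [lt_j'j | lt_jj' | eq_j'j] := ltngtP j' j.
- have le_XY := cur_scale_le_next lt_j'j (proj2 (andP j_rng)).
  rewrite (cur_scaleE (j := j')); last by lia.
  move=> fit; exfalso.
  have := leq_mul (leqnn (next_scale j')) UV_ub.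
  have := leq_mul R_ub (leqnn (next_scale j')).
  have := leq_mul (leqnn R.+1) le_XY.
  by have := mul_scale_lt Xj_gt0 le_YXj P_lt; nia.
- have le_XY := cur_scale_le_next lt_jj' (proj2 (andP j'_rng)).
  rewrite (cur_scaleE (j := j)); last by lia.
  move=> _; have := leq_mul (leqnn U) le_XY; have := leq_mul U_lt (leqnn (next_scale j)).
  by have := leq_mul (leqnn (next_scale j)) DE_ub; nia.
- subst j'; have := loses_to_fit Xj_gt0 le_YXj P_lt E_lt V_lt (same erefl).
  by lia.
Qed.


Section Machine.
Variable M : TM.
Variables (f : tm_Q M -> nat) (g : tm_G M -> nat).
Hypothesis f_inj : injective f.
Hypothesis f_range : forall q, 1 <= f q <= #|tm_Q M|.
Hypothesis g_inj : injective g.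
Hypothesis g_range : forall a, 1 <= g a <= #|tm_G M|.
Hypothesis B_large : #|tm_Q M|.+1 * #|tm_G M| + 2 <= B.
Hypothesis T_ge3 : 3 <= T.
Hypothesis dollar_moves_right : forall q, ~~ halting q ->
  (tm_delta q (tm_dollar M)).1.2 = tm_dollar M /\ (tm_delta q (tm_dollar M)).2 = true.

Local Notation k := #|tm_G M|.
Local Notation penc := (penc f g).
Local Notation dollar := (tm_dollar M).
Local Notation coin := (is_coin f g B T).

Lemma g_le_k a : g a <= k.
Proof. by case/andP: (g_range a). Qed.

Lemma k_lt_penc q a : k < penc q a.
Proof. by rewrite /penc; have := f_range q; have := g_range a; nia. Qed.

Lemma penc_ub q a : (penc q a).+2 <= B.
Proof. by rewrite /penc; have := f_range q; have := g_range a; nia. Qed.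

Lemma g_ub a : (g a).+2 <= B.
Proof. by have := k_lt_penc (tm_q0 M) a; have := penc_ub (tm_q0 M) a; have := g_le_k a; lia. Qed.

Lemma g_digit a : 0 < g a < B.
Proof. by have := g_range a; have := g_ub a; lia. Qed.

Lemma g_lt a : g a < B.
Proof. by case/andP: (g_digit a). Qed.

Lemma penc_digit q a : 0 < penc q a < B.
Proof. by have := k_lt_penc q a; have := penc_ub q a; lia. Qed.

Lemma penc_lt q a : penc q a < B.
Proof. by case/andP: (penc_digit q a). Qed.

Lemma penc_inj q a q' a' : penc q a = penc q' a' -> q = q' /\ a = a'.
Proof.
rewrite /penc => eq_penc; have ga := g_range a; have ga' := g_range a'.
have eq_f : f q = f q'.
  by have [lt_f|lt_f|//] := ltngtP (f q) (f q'); have := leq_mul lt_f (leqnn k); nia.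
by split; [apply: f_inj | apply: g_inj; nia].
Qed.

Definition digits (c : config M) p :=
  if p == cf_head c then penc (cf_state c) (cf_tape c p) else g (cf_tape c p).

Lemma digits_head c : digits c (cf_head c) = penc (cf_state c) (cf_tape c (cf_head c)).
Proof. by rewrite /digits eqxx. Qed.

Lemma digits_off c p : p != cf_head c -> digits c p = g (cf_tape c p).
Proof. by rewrite /digits => /negbTE ->. Qed.

Lemma digits_gt0 c p : 0 < digits c p.
Proof.
rewrite /digits; case: ifP => _; last by have := g_range (cf_tape c p); lia.
by have := k_lt_penc (cf_state c) (cf_tape c p); lia.
Qed.

Lemma digits_ub c p : (digits c p).+2 <= B.
Proof. by rewrite /digits; case: ifP => _; [exact: penc_ub | exact: g_ub]. Qed.

Lemma digits_lt c p : digits c p < B.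
Proof. by have := digits_ub c p; lia. Qed.

Lemma Posz_expn e : ((B%:Z) ^+ e)%R = (B ^ e)%:Z.
Proof. by rewrite -[in RHS]natz natrX natz. Qed.

Lemma enc_suffix_val c : enc f g B T c = (suffix_val (digits c) 1)%:Z.
Proof.
rewrite /enc /suffix_val (big_morph Posz PoszD (erefl _)).
by apply: eq_bigr => p _; rewrite Posz_expn -PoszM.
Qed.

Definition trans_u q am a ap i := g am * weight i.-1 + penc q a * weight i + g ap * weight i.+1.

Definition trans_v q am a ap i :=
  if halting q then trans_u q am a ap i else
  let: (q', a', to_right) := tm_delta q a in
  if to_right then g am * weight i.-1 + g a' * weight i + penc q' ap * weight i.+1
  else penc q' am * weight i.-1 + g a' * weight i + g ap * weight i.+1.

Definition left_u q ap := penc q dollar * weight 1 + g ap * weight 2.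
Definition left_v q ap := g dollar * weight 1 + penc (tm_delta q dollar).1.1 ap * weight 2.

(* The pairs (U, V) for which U·X_j - V·Y_j is a coin of level j. *)
Inductive coin_shape : nat -> nat -> Prop :=
| CopyShape a i of 1 <= i <= T : coin_shape (g a * weight i) (g a * weight i)
| TransShape q am a ap i of 2 <= i < T :
    coin_shape (trans_u q am a ap i) (trans_v q am a ap i)
| LeftShape q ap of ~~ halting q : coin_shape (left_u q ap) (left_v q ap).

Lemma Bcur_scale j : Bcur B T j = (cur_scale j)%:Z.
Proof. exact: Posz_expn. Qed.

Lemma Bnext_scale j : Bnext B T j = (next_scale j)%:Z.
Proof. by rewrite /Bnext /next_scale; case: ifP => // _; rewrite Posz_expn. Qed.

Lemma c_copyE a i j : c_copy g B T a i j = coin_val (g a * weight i) (g a * weight i) j.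
Proof. by rewrite /c_copy Bcur_scale Bnext_scale Posz_expn mulrBr -!PoszM. Qed.

Lemma c_transE q am a ap i j : 2 <= i < T ->
  c_trans f g B T q am a ap i j = coin_val (trans_u q am a ap i) (trans_v q am a ap i) j.
Proof.
move=> i_rng; have e1 : (T - i).+1 = T - i.-1 by lia.
have e2 : (T - i).-1 = T - i.+1 by lia.
rewrite /c_trans /c_trans_v /c_trans_u Bcur_scale Bnext_scale !Posz_expn e1 e2.
rewrite /coin_val /trans_v /trans_u /weight; case: ifP => _.
  by rewrite !(PoszD, PoszM).
by case: (tm_delta q a) => [[q' a'] []]; rewrite !(PoszD, PoszM).
Qed.

Lemma c_leftE q ap j : c_left f g B T q ap j = coin_val (left_u q ap) (left_v q ap) j.
Proof.
by rewrite /c_left Bcur_scale Bnext_scale !Posz_expn /coin_val /left_u /left_v /weight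
  !(PoszD, PoszM).
Qed.

Lemma coin_shape_coin U V j : coin_shape U V -> 1 <= j <= T -> coin (coin_val U V j).
Proof.
case=> [a i i_rng | q am a ap i i_rng | q ap q_run] j_rng.
- by left; exists a, i, j; rewrite c_copyE.
- right; left; exists q, am, a, ap, i, j; rewrite c_transE //; split=> //; lia.
- by right; right; exists q, ap, j; rewrite c_leftE.
Qed.

Lemma coinP c : coin c ->
  exists j U V, [/\ 1 <= j <= T, coin_shape U V & c = coin_val U V j].
Proof.
case=> [[a [i [j [i_rng j_rng ->]]]] | [[q [am [a [ap [i [j [i_rng j_rng ->]]]]]]] |
        [q [ap [j [q_run j_rng ->]]]]]].
- by exists j, (g a * weight i), (g a * weight i); rewrite c_copyE; split=> //; constructor.
- have i_rng' : 2 <= i < T by lia.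
  exists j, (trans_u q am a ap i), (trans_v q am a ap i).
  by rewrite c_transE //; split=> //; constructor.
- by exists j, (left_u q ap), (left_v q ap); rewrite c_leftE; split=> //; constructor.
Qed.

Lemma trans_u_tail_lt q a ap i : 2 <= i < T ->
  penc q a * weight i + g ap * weight i.+1 < weight i.-1.
Proof.
move=> i_rng; rewrite weight_pred; last by lia.
by apply: window2_lt; rewrite ?penc_lt ?g_lt //; lia.
Qed.

Lemma trans_v_lt q am a ap i : 2 <= i < T -> trans_v q am a ap i < B * weight i.-1.
Proof.
move=> i_rng; rewrite /trans_v /trans_u; case: ifP => _.
  by apply: window3_lt; rewrite ?penc_lt ?g_lt.
by case: (tm_delta q a) => [[q' a'] []]; apply: window3_lt; rewrite ?penc_lt ?g_lt.
Qed.

Lemma left_v_lt q ap : left_v q ap < B * weight 1.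
Proof. by apply: window2_lt; rewrite ?penc_lt ?g_lt //; lia. Qed.

Lemma coin_shape_bounded U V : coin_shape U V -> coin_bounded U V.
Proof.
have N_gt1 : 1 < N by rewrite -(expn0 B) ltn_exp2l //; lia.
case=> [a i i_rng | q am a ap i i_rng | q ap q_run].
- have := weight_le_N i_rng; have := g_ub a; have := g_range a.
  by have := weight_gt0 i; split; nia.
- have le_N := @weight_le_N i.-1 ltac:(lia).
  have U_lt : trans_u q am a ap i < B * weight i.-1.
    by apply: window3_lt; rewrite ?penc_lt ?g_lt.
  have U_ge2 : 2 <= trans_u q am a ap i.
    rewrite /trans_u weight_pred; last by lia.
    by have := g_range am; have := weight_gt0 i; have := B_gt1; nia.
  by have := trans_v_lt q am a ap i_rng; split; nia.
- have le_N := @weight_le_N 1 ltac:(lia).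
  have U_lt : left_u q ap < B * weight 1.
    by apply: window2_lt; rewrite ?penc_lt ?g_lt //; lia.
  have U_ge2 : 2 <= left_u q ap.
    rewrite /left_u; have := k_lt_penc q dollar; have := g_range ap.
    by have := weight_gt0 1; nia.
  by have := left_v_lt q ap; split; nia.
Qed.

Lemma loses_to_shape i r R' R P D E :
  R = r * weight i + R' -> 1 <= i <= T -> 0 < r -> r.+2 <= B -> R' < weight i ->
  r * weight i <= D -> P + B * weight i <= N ->
  (forall a, g a = r -> loses_to R P D E (g a * weight i) (g a * weight i)) ->
  (forall q am a ap, i.+1 < T -> g am = r ->
     loses_to R P D E (trans_u q am a ap i.+1) (trans_v q am a ap i.+1)) ->
  (forall q ap, i = 1 -> penc q dollar = r -> loses_to R P D E (left_u q ap) (left_v q ap)) ->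
  forall U V, coin_shape U V -> loses_to R P D E U V.
Proof.
move=> R_eq i_rng r_gt0 r_ub R'_lt le_D P_ub copy_case trans_case left_case U V.
have lead := loses_to_lead R_eq i_rng r_gt0 r_ub R'_lt le_D P_ub.
case=> [a i' i'_rng | q am a ap i' i'_rng | q ap q_run].
- apply: (lead _ _ _ 0 _ _ (esym (addn0 _))); rewrite ?g_digit ?weight_gt0 //.
    by rewrite ltn_pmul2r ?weight_gt0 ?g_lt.
  by move=> ->; apply: copy_case.
- have U_eq : trans_u q am a ap i' =
      g am * weight i'.-1 + (penc q a * weight i' + g ap * weight i'.+1).
    by rewrite /trans_u addnA.
  apply: (lead _ _ _ _ _ _ U_eq); rewrite ?g_digit ?trans_u_tail_lt ?trans_v_lt //; try lia.
  move=> ei ga; have {ei}ei : i' = i.+1 by lia.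
  by subst i'; apply: trans_case => //; lia.
- apply: (lead _ _ _ _ _ _ (erefl (left_u q ap)));
    rewrite ?penc_digit ?digit_tail_lt ?g_lt ?left_v_lt //; try lia.
  by move=> /esym; apply: left_case.
Qed.

Lemma loses_to_copy c i P U V : 1 <= i <= T -> (i.+2 <= cf_head c) || ((cf_head c).+2 <= i) ->
  P + B * weight i <= N -> coin_shape U V ->
  loses_to (suffix_val (digits c) i) P (digits c i * weight i) (digits c i * weight i) U V.
Proof.
move=> i_rng far P_ub; have le_iT := proj2 (andP i_rng).
have d_off p : (p == i) || (p == i.+1) -> digits c p = g (cf_tape c p).
  by move=> p_rng; apply: digits_off; apply/eqP; lia.
have R_eq := suffix_valS (digits c) le_iT.
apply: (loses_to_shape R_eq i_rng (digits_gt0 c i) (digits_ub c i)) => //.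
- exact: suffix_val_lt (digits_lt c) le_iT.
- by move=> a ->; apply: Or33.
- (* such a coin carries p(q, a) > k in cell i+1, where <C> has a tape digit *)
  move=> q am a ap lt_i1T ga; apply: loses_to_gt.
    rewrite R_eq /trans_u /= ga -!addnA ltn_add2l (suffix_valS _ (i:=i.+1)); last by lia.
    apply: lead_digit_lt; last by apply: suffix_val_lt; [exact: digits_lt | lia].
    by rewrite d_off ?eqxx ?orbT //; have := g_le_k (cf_tape c i.+1); have := k_lt_penc q a; lia.
  by have := trans_v_lt q am a ap (i:=i.+1) ltac:(lia); rewrite succnK; lia.
- move=> q ap _; rewrite d_off ?eqxx //.
  by have := g_le_k (cf_tape c i); have := k_lt_penc q dollar; lia.
Qed.

Lemma loses_to_trans q h tp P U V : 2 <= h < T -> P + B * weight h.-1 <= N -> coin_shape U V ->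
  loses_to (suffix_val (digits (Config q h tp)) h.-1) P
    (trans_u q (tp h.-1) (tp h) (tp h.+1) h) (trans_v q (tp h.-1) (tp h) (tp h.+1) h) U V.
Proof.
move=> h_rng P_ub; set d := digits _.
have d_pred : d h.-1 = g (tp h.-1) by apply: digits_off; apply/eqP => /=; lia.
have d_head : d h = penc q (tp h) by apply: digits_head.
have d_succ : d h.+1 = g (tp h.+1) by apply: digits_off; apply/eqP => /=; lia.
have suffixS p : p <= T -> suffix_val d p = d p * weight p + suffix_val d p.+1.
  exact: suffix_valS.
have R'_lt p : p <= T -> suffix_val d p.+1 < weight p.
  by move=> le_pT; apply: suffix_val_lt => //; exact: digits_lt.
have R_eq : suffix_val d h.-1 = d h.-1 * weight h.-1 + suffix_val d h.
  by rewrite suffixS ?prednK //; lia.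
apply: (loses_to_shape R_eq _ (digits_gt0 _ _) (digits_ub _ _)); try lia.
- by have := R'_lt h.-1 ltac:(lia); rewrite prednK //; lia.
- by rewrite d_pred /trans_u -addnA leq_addr.
- move=> a ga; apply: Or31; rewrite /trans_u ga d_pred -addnA -[X in X < _]addn0 ltn_add2l.
  by have := weight_gt0 h; have := penc_digit q (tp h); nia.
- rewrite prednK; last by lia.
  move=> q' am a ap _; rewrite d_pred => /g_inj->.
  have R_eq2 : suffix_val d h.-1 =
      g (tp h.-1) * weight h.-1 + (penc q (tp h) * weight h + suffix_val d h.+1).
    by rewrite R_eq suffixS ?d_pred ?d_head //; lia.
  have V_lt := trans_v_lt q' (tp h.-1) a ap h_rng.
  apply: (loses_to_digit R_eq2 (D' := g (tp h.+1) * weight h.+1)).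
  + by rewrite /trans_u addnA.
  + by rewrite /trans_u addnA.
  + by apply: digit_tail_lt; [exact: g_lt | lia].
  + by apply: R'_lt; lia.
  + by lia.
  move=> /penc_inj[eq_q eq_a]; subst q' a.
  have R_eq3 : suffix_val d h.-1 = g (tp h.-1) * weight h.-1 + penc q (tp h) * weight h +
      (g (tp h.+1) * weight h.+1 + suffix_val d h.+2).
    by rewrite R_eq2 suffixS ?d_succ ?addnA //; lia.
  apply: (loses_to_digit R_eq3 (D' := 0) (U' := 0)); rewrite ?addn0 ?weight_gt0 //.
  + by apply: R'_lt; lia.
  + by lia.
  by move=> /g_inj->; apply: Or33.
- move=> q' ap h2; rewrite d_pred.
  by have := g_le_k (tp h.-1); have := k_lt_penc q' dollar; lia.
Qed.

Lemma loses_to_left q tp P U V : tp 1 = dollar -> P + B * weight 1 <= N -> coin_shape U V ->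
  loses_to (suffix_val (digits (Config q 1 tp)) 1) P (left_u q (tp 2)) (left_v q (tp 2)) U V.
Proof.
move=> tp1 P_ub; set d := digits _.
have d1 : d 1 = penc q dollar by rewrite /d digits_head /= tp1.
have d2 : d 2 = g (tp 2) by apply: digits_off.
have R_eq := suffix_valS d (i:=1) ltac:(lia).
have g_ne_penc a q' : g a <> penc q' dollar.
  by have := g_le_k a; have := k_lt_penc q' dollar; lia.
apply: (loses_to_shape R_eq _ (digits_gt0 _ _) (digits_ub _ _)) => //; rewrite ?d1; try lia.
- by apply: suffix_val_lt; [exact: digits_lt | lia].
- exact: leq_addr.
- by move=> a /g_ne_penc.
- by move=> q' am a ap _ /g_ne_penc.
move=> q' ap _ /penc_inj[-> _].
have R_eq2 : suffix_val d 1 = penc q dollar * weight 1 + (g (tp 2) * weight 2 + suffix_val d 3).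
  by rewrite R_eq (suffix_valS d (i:=2)) ?d1 ?d2 //; lia.
apply: (loses_to_digit R_eq2 (D' := 0) (U' := 0)); rewrite /left_u ?addn0 ?weight_gt0 //.
- by apply: suffix_val_lt; [exact: digits_lt | lia].
- by have := left_v_lt q ap; lia.
by move=> /g_inj->; apply: Or33.
Qed.

Lemma digits_step_far c p : (p.+2 <= cf_head c) || ((cf_head c).+2 <= p) ->
  digits (step c) p = digits c p.
Proof.
case: c => q h tp /= far; rewrite /step /=; case: ifP => // _.
case: (tm_delta q (tp h)) => [[q' a'] to_right]; rewrite /digits /=.
have -> : (p == h) = false by apply/negbTE/eqP; lia.
have -> : (p == if to_right then h.+1 else h.-1) = false.
  by case: to_right; apply/negbTE/eqP; lia.
by [].
Qed.

Lemma suffix_digits_ub c i : 1 <= i <= T -> (suffix_val (digits c) i).+2 <= N.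
Proof.
move=> i_rng; apply: leq_trans (weight_le_N i_rng).
by apply: suffix_val_ub; [exact: digits_ub | lia].
Qed.

(* The amount left once the cells before i are paid for. *)
Definition greedy_state d e i j := state_val (suffix_val d i) (prefix_val e i) j.

Lemma greedy_step_coin j R P D E R' P' : 1 <= j <= T -> coin_shape D E ->
  R = D + R' -> P' = P + E -> R.+2 <= N -> P < N ->
  (forall U V, coin_shape U V -> loses_to R P D E U V) ->
  greedy_step coin (state_val R P j) (state_val R' P' j).
Proof.
move=> j_rng sh_DE eq_R eq_P R_ub P_lt losers.
have [D_lt E_lt DE_ub] := coin_shape_bounded sh_DE.
exists (coin_val D E j); split.
- exact: coin_shape_coin.
- by rewrite /coin_val /state_val eq_R mulnDl; lia.
- move=> _ /coinP[j' [U [V [j'_rng sh ->]]]]; apply: coin_val_max => //.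
    exact: coin_shape_bounded.
  by move=> _; apply: losers.
- by rewrite /coin_val /state_val eq_R eq_P !mulnDl; lia.
Qed.

Lemma greedy_run_copies c j i n : 1 <= j <= T -> 1 <= i -> i + n <= T.+1 ->
  (forall p, i <= p < i + n -> (p.+2 <= cf_head c) || ((cf_head c).+2 <= p)) ->
  greedy_run coin n (greedy_state (digits c) (digits (step c)) i j)
    (greedy_state (digits c) (digits (step c)) (i + n) j).
Proof.
move=> j_rng; elim: n i => [|n IHn] i i_ge1 le_inT far /=; first by rewrite addn0.
exists (greedy_state (digits c) (digits (step c)) i.+1 j); split; last first.
  by rewrite -addSnnS; apply: IHn => // [|p p_rng]; [lia | apply: far; lia].
have far_i := far i ltac:(lia); have i_rng : 1 <= i <= T by lia.
have di : digits c i = g (cf_tape c i) by apply: digits_off; apply/eqP; lia.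
apply: (greedy_step_coin j_rng (CopyShape (cf_tape c i) i_rng)).
- by rewrite suffix_valS ?di //; lia.
- by rewrite prefix_valS // digits_step_far // di.
- exact: suffix_digits_ub.
- by apply: prefix_val_lt; [lia | exact: digits_lt | lia].
- move=> U V sh; rewrite -di; apply: loses_to_copy => //.
  by apply: prefix_val_ub => //; exact: digits_lt.
Qed.

Lemma trans_v_step q h tp : 2 <= h ->
  let e := digits (step (Config q h tp)) in
  trans_v q (tp h.-1) (tp h) (tp h.+1) h =
    e h.-1 * weight h.-1 + e h * weight h + e h.+1 * weight h.+1.
Proof.
move=> h_ge2 /=; rewrite /trans_v /trans_u /step /digits /=.
have [ne_pred ne_succ] : h.-1 != h /\ h.+1 != h by split; apply/eqP; lia.
have [ne_ps ne_hs] : h.-1 != h.+1 /\ h != h.+1 by split; apply/eqP; lia.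
case: ifP => _; first by rewrite !eqxx (negbTE ne_pred) (negbTE ne_succ).
case: (tm_delta q (tp h)) => [[q' a'] []] /=; rewrite !eqxx (negbTE ne_pred) (negbTE ne_succ).
  by rewrite (negbTE ne_ps) (negbTE ne_hs).
by rewrite eq_sym (negbTE ne_pred) eq_sym (negbTE ne_ps).
Qed.

Lemma greedy_step_trans q h tp j : 1 <= j <= T -> 2 <= h < T ->
  let d := digits (Config q h tp) in let e := digits (step (Config q h tp)) in
  greedy_step coin (greedy_state d e h.-1 j) (greedy_state d e h.+2 j).
Proof.
move=> j_rng h_rng d e.
have d_pred : d h.-1 = g (tp h.-1) by apply: digits_off; apply/eqP => /=; lia.
have d_head : d h = penc q (tp h) by apply: digits_head.
have d_succ : d h.+1 = g (tp h.+1) by apply: digits_off; apply/eqP => /=; lia.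
have sh := TransShape q (tp h.-1) (tp h) (tp h.+1) h_rng.
apply: (greedy_step_coin j_rng sh).
- rewrite (suffix_valS _ (i := h.-1)) ?prednK ?(suffix_valS _ (i := h))
    ?(suffix_valS _ (i := h.+1)); try lia.
  by rewrite d_pred d_head d_succ /trans_u !addnA.
- rewrite trans_v_step -/e; last by lia.
  have P_eq : prefix_val e h = prefix_val e h.-1 + e h.-1 * weight h.-1.
    by rewrite -prefix_valS ?prednK //; lia.
  by rewrite !prefix_valS ?P_eq; lia.
- by apply: suffix_digits_ub; lia.
- by apply: prefix_val_lt; [lia | exact: digits_lt | lia].
- move=> U V; apply: loses_to_trans => //.
  by apply: prefix_val_ub; [exact: digits_lt | lia].
Qed.

Lemma left_v_step q tp : ~~ halting q -> tp 1 = dollar ->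
  let e := digits (step (Config q 1 tp)) in left_v q (tp 2) = e 1 * weight 1 + e 2 * weight 2.
Proof.
move=> q_run tp1 /=; have [keep_dollar go_right] := dollar_moves_right q_run.
rewrite /step /= (negbTE q_run) tp1.
by rewrite /left_v; case: (tm_delta q dollar) keep_dollar go_right => [[q' a'] dir] /= -> ->.
Qed.

Lemma greedy_step_left q tp j : 1 <= j <= T -> ~~ halting q -> tp 1 = dollar ->
  let d := digits (Config q 1 tp) in let e := digits (step (Config q 1 tp)) in
  greedy_step coin (greedy_state d e 1 j) (greedy_state d e 3 j).
Proof.
move=> j_rng q_run tp1 d e.
have d1 : d 1 = penc q dollar by rewrite /d digits_head /= tp1.
have d2 : d 2 = g (tp 2) by apply: digits_off.
apply: (greedy_step_coin j_rng (LeftShape (tp 2) q_run)).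
- rewrite (suffix_valS _ (i := 1)) ?(suffix_valS _ (i := 2)); try lia.
  by rewrite d1 d2 /left_u addnA.
- by rewrite left_v_step // [prefix_val e 3]prefix_valS // [prefix_val e 2]prefix_valS // addnA.
- by apply: suffix_digits_ub; lia.
- by rewrite prefix_val1 expn_gt0 (ltn_trans _ B_gt1).
- move=> U V; apply: loses_to_left => //.
  by apply: prefix_val_ub; [exact: digits_lt | lia].
Qed.

Lemma greedy_state_first d e j :
  greedy_state d e 1 j = ((suffix_val d 1)%:Z * (cur_scale j)%:Z)%R.
Proof. by rewrite /greedy_state /state_val prefix_val1 mul0n addn0 PoszM. Qed.

Lemma greedy_state_last d e j :
  greedy_state d e T.+1 j = ((suffix_val e 1)%:Z * (next_scale j)%:Z)%R.
Proof. by rewrite /greedy_state /state_val suffix_val_end mul0n add0n PoszM. Qed.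

Lemma greedy_run_interior c j : 1 <= j <= T -> 2 <= cf_head c < T ->
  greedy_run coin T.-2 (greedy_state (digits c) (digits (step c)) 1 j)
    (greedy_state (digits c) (digits (step c)) T.+1 j).
Proof.
case: c => q h tp j_rng /= h_rng; set st := greedy_state _ _.
have -> : T.-2 = (h - 2) + (1 + (T - h.+1)) by lia.
apply: (greedy_run_cat (W2 := st h.-1 j)).
  have -> : h.-1 = 1 + (h - 2) by lia.
  by apply: greedy_run_copies => // [|p p_rng /=]; lia.
apply: (greedy_run_cat (W2 := st h.+2 j)).
  by exists (st h.+2 j); split=> //; apply: greedy_step_trans.
have -> : T.+1 = h.+2 + (T - h.+1) by lia.
by apply: greedy_run_copies => // [|p p_rng /=]; lia.
Qed.

Lemma greedy_run_left_end c j : 1 <= j <= T -> cf_head c = 1 -> ~~ halting (cf_state c) ->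
  cf_tape c 1 = dollar ->
  greedy_run coin T.-1 (greedy_state (digits c) (digits (step c)) 1 j)
    (greedy_state (digits c) (digits (step c)) T.+1 j).
Proof.
case: c => q h tp j_rng /= -> q_run tp1; set st := greedy_state _ _.
have -> : T.-1 = 1 + (T - 2) by lia.
apply: (greedy_run_cat (W2 := st 3 j)).
  by exists (st 3 j); split=> //; apply: greedy_step_left.
have -> : T.+1 = 3 + (T - 2) by lia.
by apply: greedy_run_copies => // [|p p_rng /=]; lia.
Qed.

Lemma greedy_run_config c j : 1 <= j <= T -> 1 <= cf_head c < T -> cf_tape c 1 = dollar ->
  (halting (cf_state c) -> cf_head c = 2) ->
  exists m, (m = T.-1 \/ m = T.-2) /\
    greedy_run coin m (enc f g B T c * Bcur B T j)%R (enc f g B T (step c) * Bnext B T j)%R.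
Proof.
move=> j_rng h_rng tp1 halt_head.
rewrite !enc_suffix_val Bcur_scale Bnext_scale -(greedy_state_first _ (digits (step c))).
rewrite -(greedy_state_last (digits c)).
have [h1 | h_ne1] := eqVneq (cf_head c) 1.
  exists T.-1; split; first by left.
  by apply: greedy_run_left_end => //; apply/negP => /halt_head; rewrite h1.
by exists T.-2; split; [right | apply: greedy_run_interior; lia].
Qed.

End Machine.

End Positional.

Theorem lemma3p2 (M : TM) (x : seq (tm_G M)) (T B : nat)
    (f : tm_Q M -> nat) (g : tm_G M -> nat)
    (hSigma : forall a, tm_Sigma M a -> a != tm_blank M)
    (hx : all (tm_Sigma M) x)
    (hf_inj : injective f) (hf_rng : forall q, (1 <= f q <= #|tm_Q M|)%N)
    (hg_inj : injective g) (hg_rng : forall a, (1 <= g a <= #|tm_G M|)%N)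
    (hB : ((#|tm_Q M|.+1) * #|tm_G M| + 2 <= B)%N)
    (hdollar : forall q, ~~ halting q ->
        (tm_delta q (tm_dollar M)).1.2 = tm_dollar M /\
        (tm_delta q (tm_dollar M)).2 = true)
    (hT : ((size x) + 3 <= T)%N)
    (hhalts : exists t, (t <= T)%N /\ halting (cf_state (conf_at x t.+1)))
    (hhead : forall t, (1 <= t)%N -> (cf_head (conf_at x t) < T)%N)
    (hhaltcfg : forall t, (1 <= t)%N -> halting (cf_state (conf_at x t)) ->
        [/\ cf_head (conf_at x t) = 2%N,
            cf_tape (conf_at x t) 2 = tm_blank M
          & cf_tape (conf_at x t) 3 = tm_blank M])
    (j : nat) (hj : (1 <= j <= T)%N) :
  exists m : nat, (m = T.-1 \/ m = T.-2) /\
    greedy_run (is_coin f g B T) m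
      (enc f g B T (conf_at x j) * Bcur B T j)
      (enc f g B T (step (conf_at x j)) * Bnext B T j).
Proof.
have B_gt1 : (1 < B)%N by have := hg_rng (tm_blank M); lia.
have T_ge3 : (3 <= T)%N by lia.
have [head_ge1 tape1] := conf_at_left_end hdollar x j.
apply: (greedy_run_config B_gt1 hf_inj hf_rng hg_inj hg_rng hB T_ge3 hdollar) => //.
  by rewrite head_ge1 hhead //; case/andP: hj.
by move=> halted; case: (hhaltcfg j _ halted) => //; case/andP: hj.
Qed.
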